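(* Let $P,Q$ be posets with least elements and $\langle f,g\rangle:P\times Q\to P\times Q$ a monotone map (with $f:P\times Q\to P$, $g:P\times Q\to Q$, product ordered coordinatewise). Let $m,n\ge0$ be such that for every $x\in P$ the map $g_x=g(x,-)$ satisfies $\mu_y.g(x,y)=g_x^m(\bot)$, and such that the map $h(x)=f(x,\mu_y.g(x,y))$ satisfies $\mu.h=h^n(\bot)$. Then $\langle f,g\rangle$ has a least fixed point and $\mu.\langle f,g\rangle=\langle f,g\rangle^{(n+1)(m+1)-1}(\bot,\bot)$.
   Context: $\mu.k$ denotes the least fixed point of a monotone map $k$; $k^n$ the $n$-fold composite. *)

From HB Require Import structures.
From mathcomp Require Import all_boot all_order.
Set Implicit Arguments. Unset Strict Implicit. Unset Printing Implicit Defensive.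
Import Order.TTheory.
Local Open Scope order_scope.

Definition is_lfp (T : Type) (le : T -> T -> bool) (k : T -> T) (a : T) : Prop :=
  k a = a /\ forall b, k b = b -> le a b.

Definition prod_le (d1 d2 : Order.disp_t) (P : porderType d1) (Q : porderType d2)
  (u v : P * Q) : bool := (u.1 <= v.1) && (u.2 <= v.2).

Definition pair_fun (P Q : Type) (f : P -> Q -> P) (g : P -> Q -> Q) (u : P * Q) : P * Q :=
  (f u.1 u.2, g u.1 u.2).

(* The Kleene iterates of a monotone map from the bottom lie below each of its
   fixed points, so an iterate that dominates some fixed point is the least
   fixed point.  For <f,g>, the first component of the iterate gains at least
   one application of h(x) = f(x, g_x^m(bot)) every m+1 steps, while in
   between the second component runs through g_x^j(bot).  Hence iterate
   n(m+1)+m dominates (h^n(bot), g_x^m(bot)) with x = h^n(bot), which is a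
   fixed point of <f,g>. *)
From HB Require Import structures.
From mathcomp Require Import all_boot all_order.
Set Implicit Arguments.
Unset Strict Implicit.
Unset Printing Implicit Defensive.
Import Order.TTheory.
Local Open Scope order_scope.

Section KleeneIteration.
Variables (d : Order.disp_t) (T : bPOrderType d) (k : T -> T).
Hypothesis k_homo : {homo k : x y / x <= y}.

Lemma iter_bot_homo : {homo (fun i => iter i k \bot) : i j / (i <= j)%N >-> i <= j}.
Proof.
apply: homo_leq => [x|y x z|i]; [exact: le_refl | exact: le_trans |].
by elim: i => [|i IH]; rewrite ?le0x //= k_homo.
Qed.

Lemma iter_bot_le_fixpoint c i : k c = c -> iter i k \bot <= c.
Proof. by move=> kc; elim: i => [|i IH]; rewrite ?le0x //= -kc k_homo. Qed.

Lemma is_lfp_iter_bot c N :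
  k c = c -> c <= iter N k \bot -> is_lfp <=%O k (iter N k \bot).
Proof.
move=> kc c_le; have -> : iter N k \bot = c.
  by apply/le_anti; rewrite c_le iter_bot_le_fixpoint.
by split=> // b kb; apply: le_trans c_le (iter_bot_le_fixpoint N kb).
Qed.

End KleeneIteration.

Section PairIteration.
Variables (d1 d2 : Order.disp_t) (P : bPOrderType d1) (Q : bPOrderType d2).
Variables (f : P -> Q -> P) (g : P -> Q -> Q) (m : nat).
Hypothesis mono : forall (x x' : P) (y y' : Q), x <= x' -> y <= y' ->
  f x y <= f x' y' /\ g x y <= g x' y'.

(* On [P *p Q], [<=] and [\bot] are [prod_le] and [(\bot, \bot)] up to conversion. *)
Local Notation F := (pair_fun f g : P *p Q -> P *p Q).
Local Notation kleene i := (iter i F \bot).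
Local Notation h := (fun x => f x (iter m (g x) \bot)).

Lemma pair_fun_homo : {homo F : u v / u <= v}.
Proof.
move=> [x y] [x' y'] /andP[/= le_x le_y].
by have [le_f le_g] := mono le_x le_y; rewrite leEprod /= le_f le_g.
Qed.

Lemma kleene_fst_homo : {homo (fun i => (kleene i).1) : i j / (i <= j)%N >-> i <= j}.
Proof. by move=> i j le_ij; have /andP[] := iter_bot_homo pair_fun_homo le_ij. Qed.

Lemma iter_g_le_kleene x N j :
  x <= (kleene N).1 -> iter j (g x) \bot <= (kleene (j + N)).2.
Proof.
move=> le_x; elim: j => [|j IH]; first exact: le0x.
have le_x' : x <= (kleene (j + N)).1.
  exact: le_trans le_x (kleene_fst_homo (leq_addl _ _)).
exact: (mono le_x' IH).2.
Qed.

Lemma iter_h_le_kleene i : iter i h \bot <= (kleene (i * m.+1)).1.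
Proof.
elim: i => [|i IH]; first exact: le0x.
have le_y := iter_g_le_kleene m IH.
have le_x : iter i h \bot <= (kleene (m + i * m.+1)).1.
  exact: le_trans IH (kleene_fst_homo (leq_addl _ _)).
by rewrite mulSn addSn; exact: (mono le_x le_y).1.
Qed.

Lemma is_lfp_kleene_pair n :
  let x := iter n h \bot in
  h x = x -> g x (iter m (g x) \bot) = iter m (g x) \bot ->
  is_lfp <=%O F (kleene (m + n * m.+1)).
Proof.
move=> x hx gx.
apply: (is_lfp_iter_bot pair_fun_homo (c := (x, iter m (g x) \bot))).
  by rewrite /pair_fun /= hx gx.
have le_x := iter_h_le_kleene n.
rewrite leEprod /= iter_g_le_kleene // andbT.
exact: le_trans le_x (kleene_fst_homo (leq_addl _ _)).
Qed.

End PairIteration.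

Theorem mainTheorem14 (d1 d2 : Order.disp_t) (P : bPOrderType d1) (Q : bPOrderType d2)
  (f : P -> Q -> P) (g : P -> Q -> Q) (m n : nat)
  (mono : forall (x x' : P) (y y' : Q), x <= x' -> y <= y' ->
            f x y <= f x' y' /\ g x y <= g x' y')
  (Hg : forall x : P, is_lfp <=%O (g x) (iter m (g x) \bot))
  (Hh : is_lfp <=%O (fun x : P => f x (iter m (g x) \bot))
                    (iter n (fun x : P => f x (iter m (g x) \bot)) \bot)) :
  is_lfp (@prod_le d1 d2 P Q) (@pair_fun P Q f g)
         (iter ((n.+1 * m.+1).-1) (@pair_fun P Q f g) (\bot, \bot)).
Proof.
have -> : (n.+1 * m.+1).-1 = (m + n * m.+1)%N by rewrite mulSn addSn.
exact: (is_lfp_kleene_pair mono Hh.1 (Hg _).1).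
Qed.
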